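(* Let $k\ge 2$ and let $p,q$ be real polynomials with $\deg p=k$, $\deg q=k-1$, whose roots are all real and simple and strictly interlace: $p_1<q_1<p_2<q_2<\dots<q_{k-1}<p_k$, where $p_1<\dots<p_k$ are the roots of $p$ and $q_1<\dots<q_{k-1}$ those of $q$. Then every root of the Wronskian $W(p,q)=p'q-q'p$ lies in the set $\Omega_p=\overline{D_0}\setminus\bigcup_{j=1}^{k-1}D_j$.
   Context: For $j=1,\dots,k-1$, $D_j\subset\mathbb{C}$ denotes the open disk whose boundary circle $C_j$ has the segment $[p_j,p_{j+1}]$ as a diameter (center $\frac{p_j+p_{j+1}}2$, radius $\frac{p_{j+1}-p_j}2$); $D_0$ denotes the open disk whose boundary circle $C_0$ has $[p_1,p_k]$ as a diameter; $\overline{D_0}$ is its closure. *)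

(* The complex plane is modelled by an arbitrary
   numeric closed field C (e.g. algC); its real elements (Num.real)
   form a real closed field. *)
From HB Require Import structures.
From mathcomp Require Export all_boot all_order all_algebra.
Set Implicit Arguments. Unset Strict Implicit. Unset Printing Implicit Defensive.
Export Order.TTheory GRing.Theory Num.Theory.
Local Open Scope ring_scope.

Definition in_open_diam_disk (C : numClosedFieldType) (a b z : C) : Prop :=
  `|z - (a + b) / 2%:R| < (b - a) / 2%:R.

Definition in_closed_diam_disk (C : numClosedFieldType) (a b z : C) : Prop :=
  `|z - (a + b) / 2%:R| <= (b - a) / 2%:R.

(* Omega_p for the sorted root list ps = [p_1; ...; p_k] (0-indexed):
   closure of D_0 minus the union of the open disks D_j, j = 1..k-1. *)
Definition Omega (C : numClosedFieldType) (ps : seq C) (z : C) : Prop :=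
  in_closed_diam_disk ps`_0 (last 0 ps) z /\
  (forall j : nat, (j < (size ps).-1)%N -> ~ in_open_diam_disk ps`_j ps`_j.+1 z).

Definition wronskian (C : numClosedFieldType) (p q : {poly C}) : {poly C} :=
  p^`() * q - q^`() * p.

From HB Require Import structures.
From mathcomp Require Import all_boot all_order all_algebra.
From mathcomp Require Import ring.
Set Implicit Arguments.
Unset Strict Implicit.
Unset Printing Implicit Defensive.
Import Order.TTheory GRing.Theory Num.Theory.
Local Open Scope ring_scope.

(* Write p = a * prod_i (X - p_i) and expand q = b * prod_j (X - q_j) in the
   Lagrange basis r_i = prod_(l <> i) (X - p_l): q = b * sum_i lam_i r_i, where
   interlacing makes every lam_i positive.  Since W((X - p_i) r_i, r_i) = r_i^2,
   W(p, q) = a b sum_i lam_i r_i^2, so a root z of W is no p_i and satisfies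
   sum_i lam_i / (z - p_i)^2 = 0.  With z - p_i = u_i + i y and
   f_i = lam_i / |z - p_i|^4 > 0, the real and imaginary parts give
   sum_i f_i (u_i^2 - y^2) = 0 and y sum_i f_i u_i = 0, hence
   sum_i f_i (u_i - s) (s u_i + y^2) = 0 for every real s.  As z lies in the
   disk with diameter [p_j, p_l] iff u_j u_l + y^2 < 0, taking s = u_k (resp.
   s = u_(j+1)) makes all the terms of this sum of one sign, one of them
   strictly, if z were outside D_0 (resp. inside D_j). *)

Lemma size_prod_XsubC_ord (R : nzRingType) (m : nat) (G : 'I_m -> R) :
  size (\prod_(i < m) ('X - (G i)%:P)) = m.+1.
Proof. by rewrite size_prod_XsubC [index_enum _]unlock -enumT size_enum_ord. Qed.

Lemma prod_XsubC_nth_roots (F : fieldType) (m : nat) (p : {poly F}) (s : seq F) :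
  size s = m -> size p = m.+1 -> uniq s -> (forall z, root p z = (z \in s)) ->
  p = lead_coef p *: \prod_(i < m) ('X - (s`_i)%:P).
Proof.
move=> <- size_p s_uniq p_roots; rewrite {1}(all_roots_prod_XsubC size_p).
- by rewrite (big_nth 0) big_mkord.
- by apply/allP => x; rewrite p_roots.
- by rewrite uniq_rootsE.
Qed.

Section PuncturedProducts.

Variables (F : fieldType) (n : nat) (c : 'I_n.+1 -> F).

Definition prod_XsubC_omit (i : 'I_n.+1) := \prod_(j < n) ('X - (c (lift i j))%:P).

Lemma prod_XsubC_lift i :
  \prod_(l < n.+1) ('X - (c l)%:P) = ('X - (c i)%:P) * prod_XsubC_omit i.
Proof. exact: bigD1_ord. Qed.

Lemma prod_XsubC_omit_eq0 i l : i != l -> (prod_XsubC_omit i).[c l] = 0.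
Proof.
move=> il; rewrite horner_prod; case: (unliftP i l) => [j l_lift | l_eq]; last first.
  by rewrite l_eq eqxx in il.
by rewrite (bigD1 j) //= hornerXsubC l_lift subrr mul0r.
Qed.

Hypothesis c_inj : injective c.

Lemma prod_XsubC_omit_neq0 i : (prod_XsubC_omit i).[c i] != 0.
Proof.
rewrite horner_prod; apply/prodf_neq0 => j _.
by rewrite hornerXsubC subr_eq0 (inj_eq c_inj) neq_lift.
Qed.

Lemma lagrange_interpolation (q : {poly F}) : (size q <= n.+1)%N ->
  q = \sum_i (q.[c i] / (prod_XsubC_omit i).[c i]) *: prod_XsubC_omit i.
Proof.
move=> size_q; apply/eqP; rewrite -subr_eq0; apply/eqP.
apply: (roots_geq_poly_eq0 (rs := codom c)); last 1 first.
  rewrite size_codom card_ord (leq_trans (size_polyD _ _)) // size_polyN geq_max size_q.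
  apply: (leq_trans (size_sum _ _ _)); apply/bigmax_leqP => i _.
  by rewrite (leq_trans (size_scale_leq _ _)) ?size_prod_XsubC_ord.
- apply/allP => _ /codomP[l ->]; rewrite /root hornerD hornerN horner_sum.
  rewrite (bigD1 l) //= big1 => [|i il]; last first.
    by rewrite hornerZ (prod_XsubC_omit_eq0 il) mulr0.
  by rewrite hornerZ divfK ?prod_XsubC_omit_neq0 // addr0 subrr.
- exact/injectiveP.
Qed.

Lemma sum_omit_sqr_root_inv_sqr (lam : 'I_n.+1 -> F) (z : F) : (forall i, lam i != 0) ->
  (\sum_i lam i *: prod_XsubC_omit i ^+ 2).[z] = 0 ->
  (forall i, z != c i) /\ \sum_i lam i / (z - c i) ^+ 2 = 0.
Proof.
move=> lam_neq0 sum_eq0.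
have z_neq l : z != c l.
  apply/eqP => z_eq; move/eqP: sum_eq0; rewrite z_eq horner_sum (bigD1 l) //=.
  rewrite big1 => [|i il]; last first.
    by rewrite hornerZ horner_exp (prod_XsubC_omit_eq0 il) expr0n mulr0.
  rewrite addr0 hornerZ horner_exp mulf_eq0 expf_eq0 (negPf (lam_neq0 l)).
  by rewrite (negPf (prod_XsubC_omit_neq0 l)) andbF.
split=> //; set R0 := \prod_l (z - c l).
have R0_neq0 : R0 != 0 by apply/prodf_neq0 => l _; rewrite subr_eq0.
have omit_z i : (prod_XsubC_omit i).[z] = R0 / (z - c i).
  have := congr1 (horner^~ z) (prod_XsubC_lift i).
  rewrite /= hornerM hornerXsubC horner_prod; under eq_bigr do rewrite hornerXsubC.
  by rewrite -/R0 => ->; rewrite mulrAC divff ?mul1r ?subr_eq0.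
apply: (mulfI (expf_neq0 2 R0_neq0)); rewrite mulr0 -[RHS]sum_eq0 horner_sum mulr_sumr.
apply: eq_bigr => i _; rewrite hornerZ horner_exp omit_z.
by rewrite expr_div_n mulrCA mulrA.
Qed.

End PuncturedProducts.

Section Wronskian.

Variable C : numClosedFieldType.
Implicit Types p q r : {poly C}.

Lemma wronskianZl a p q : wronskian (a *: p) q = a *: wronskian p q.
Proof. by rewrite /wronskian derivZ -scalerAl -scalerAr scalerBr. Qed.

Lemma wronskianZr a p q : wronskian p (a *: q) = a *: wronskian p q.
Proof. by rewrite /wronskian derivZ -scalerAl -scalerAr scalerBr. Qed.

Lemma wronskian_sumr (I : Type) (s : seq I) p (G : I -> {poly C}) :
  wronskian p (\sum_(i <- s) G i) = \sum_(i <- s) wronskian p (G i).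
Proof. by rewrite /wronskian raddf_sum mulr_sumr mulr_suml -sumrB. Qed.

Lemma wronskian_mulXsubC a r : wronskian (('X - a%:P) * r) r = r ^+ 2.
Proof. by rewrite /wronskian derivM derivXsubC mul1r; ring. Qed.

Lemma wronskian_prod_XsubC_lagrange (n : nat) (c : 'I_n.+1 -> C) q :
  injective c -> (size q <= n.+1)%N ->
  wronskian (\prod_l ('X - (c l)%:P)) q =
  \sum_i (q.[c i] / (prod_XsubC_omit c i).[c i]) *: prod_XsubC_omit c i ^+ 2.
Proof.
move=> c_inj size_q; rewrite {1}(lagrange_interpolation c_inj size_q) wronskian_sumr.
apply: eq_bigr => i _.
by rewrite wronskianZr (prod_XsubC_lift c i) wronskian_mulXsubC.
Qed.

End Wronskian.

Section InterlacedSequences.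

Variables (R : numDomainType) (n : nat) (ps qs : seq R).
Hypotheses (size_ps : size ps = n.+2) (size_qs : size qs = n.+1)
  (interlace : forall i, (i < n.+1)%N -> ps`_i < qs`_i /\ qs`_i < ps`_i.+1).

Lemma interlaced_sortedl : sorted <%R ps.
Proof.
by apply/(sortedP 0) => i; rewrite size_ps ltnS => /interlace[]; apply: lt_trans.
Qed.

Lemma interlaced_sortedr : sorted <%R qs.
Proof.
apply/(sortedP 0) => i; rewrite size_qs => i_lt.
by have [_ /lt_trans->] := interlace (ltnW i_lt); have [] := interlace i_lt.
Qed.

Lemma interlaced_ltl (i j : 'I_n.+2) : (i < j)%N -> ps`_i < ps`_j.
Proof. by rewrite (lt_sorted_ltn_nth 0 interlaced_sortedl) ?inE ?size_ps. Qed.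

Lemma interlaced_lel i j : (i < n.+2)%N -> (j < n.+2)%N -> (i <= j)%N -> ps`_i <= ps`_j.
Proof.
by move=> i_lt j_lt; rewrite (lt_sorted_leq_nth 0 interlaced_sortedl) ?inE ?size_ps.
Qed.

Lemma interlaced_injl : injective (fun i : 'I_n.+2 => ps`_i).
Proof.
move=> i j /eqP; rewrite (nth_uniq 0 _ _ (lt_sorted_uniq interlaced_sortedl)) ?size_ps //.
by move/eqP/val_inj.
Qed.

Lemma interlaced_below (i : 'I_n.+2) (j : 'I_n.+1) : (j < i)%N -> qs`_j < ps`_i.
Proof.
move=> ji; have [_ /lt_le_trans] := interlace (ltn_ord j); apply.
by apply: interlaced_lel ji; [rewrite ltnS | ]; apply: ltn_ord.
Qed.

Lemma interlaced_above (i : 'I_n.+2) (j : 'I_n.+1) : (i <= j)%N -> ps`_i < qs`_j.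
Proof.
move=> ij; have [+ _] := interlace (ltn_ord j); apply: le_lt_trans.
by apply: interlaced_lel ij; [| apply: leqW]; apply: ltn_ord.
Qed.

End InterlacedSequences.

Lemma interlacing_weight_gt0 (R : numFieldType) (n : nat)
    (P : 'I_n.+2 -> R) (Q : 'I_n.+1 -> R) :
  (forall i j : 'I_n.+2, (i < j)%N -> P i < P j) ->
  (forall (i : 'I_n.+2) (j : 'I_n.+1), (j < i)%N -> Q j < P i) ->
  (forall (i : 'I_n.+2) (j : 'I_n.+1), (i <= j)%N -> P i < Q j) ->
  forall i, 0 < (\prod_j ('X - (Q j)%:P)).[P i] / (prod_XsubC_omit P i).[P i].
Proof.
move=> P_incr Q_below Q_above i; rewrite !horner_prod -prodf_div.
apply: prodr_gt0 => j _; rewrite !hornerXsubC.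
have [ji | ij] := ltnP j i.
  have lift_lt : (lift i j < i)%N by rewrite /= /bump [(i <= j)%N]leqNgt ji.
  by rewrite divr_gt0 // subr_gt0 ?Q_below ?P_incr.
have lift_gt : (i < lift i j)%N by rewrite /= /bump ij add1n ltnS.
by rewrite -mulrNN -invrN divr_gt0 // oppr_gt0 subr_lt0 ?Q_above ?P_incr.
Qed.

Section TiltedSums.

Variables (R : numDomainType) (n : nat) (f u : 'I_n.+2 -> R) (y : R).
Hypotheses (f_gt0 : forall i, 0 < f i) (u_real : forall i, u i \is Num.real)
  (y_real : y \is Num.real) (u_decr : forall i j : 'I_n.+2, (i < j)%N -> u j < u i)
  (sum_sqr_eq0 : \sum_i f i * (u i ^+ 2 - y ^+ 2) = 0)
  (y_sum_lin_eq0 : y * \sum_i f i * u i = 0).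

Let u_nincr (i j : 'I_n.+2) : (i <= j)%N -> u j <= u i.
Proof. by rewrite leq_eqVlt => /orP[/eqP/val_inj -> // | /u_decr/ltW]. Qed.

Let sqr_addr_ge0 s : s \is Num.real -> 0 <= s ^+ 2 + y ^+ 2.
Proof. by move=> s_real; rewrite addr_ge0 // -realEsqr. Qed.

Lemma weighted_sum_lin_eq0 : \sum_i f i * u i = 0.
Proof.
have [y0 | ] := eqVneq y 0; last by move/mulfI; apply; rewrite y_sum_lin_eq0 mulr0.
have term_eq0 i : f i * u i ^+ 2 = 0.
  apply: (psumr_eq0P (P := predT) (F := fun l => f l * u l ^+ 2)) => // [l _ | ].
    by rewrite mulr_ge0 ?(ltW (f_gt0 l)) // -realEsqr.
  by rewrite -[RHS]sum_sqr_eq0; apply: eq_bigr => l _; rewrite y0 expr0n subr0.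
have u_eq0 i : u i = 0.
  by apply/eqP; move/eqP: (term_eq0 i); rewrite mulf_eq0 gt_eqF // expf_eq0.
by have := @u_decr ord0 ord_max isT; rewrite !u_eq0 ltxx.
Qed.

Lemma weighted_sum_tilted_eq0 s : \sum_i f i * ((u i - s) * (s * u i + y ^+ 2)) = 0.
Proof.
transitivity (s * \sum_i f i * (u i ^+ 2 - y ^+ 2) + (y ^+ 2 - s ^+ 2) * \sum_i f i * u i).
  by rewrite !mulr_sumr -big_split; apply: eq_bigr => i _ /=; ring.
by rewrite sum_sqr_eq0 weighted_sum_lin_eq0 !mulr0 addr0.
Qed.

Lemma outer_pair_nonpos : u ord0 * u ord_max + y ^+ 2 <= 0.
Proof.
set s := u ord_max; set X := _ + _.
rewrite real_leNgt ?rpredD ?rpredM ?rpredX ?u_real //; apply/negP => X_gt0.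
have gap : 0 < u ord0 - s by rewrite subr_gt0 u_decr.
have term_ge0 l : 0 <= f l * ((u l - s) * (s * u l + y ^+ 2)).
  have ul_ge : s <= u l by rewrite u_nincr ?leq_ord.
  have ul_le : u l <= u ord0 by rewrite u_nincr.
  apply: mulr_ge0; first exact: ltW.
  apply: mulr_ge0; first by rewrite subr_ge0.
  (* s * u l + y ^+ 2 is affine in u l, nonnegative at s and positive at u ord0. *)
  rewrite -(pmulr_rge0 _ gap).
  have -> : (u ord0 - s) * (s * u l + y ^+ 2) =
      (u ord0 - u l) * (s ^+ 2 + y ^+ 2) + (u l - s) * X by rewrite /X; ring.
  by apply: addr_ge0; apply: mulr_ge0; rewrite ?subr_ge0 ?sqr_addr_ge0 ?u_real ?(ltW X_gt0).
have /eqP : f ord0 * ((u ord0 - s) * (s * u ord0 + y ^+ 2)) = 0.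
  exact: (psumr_eq0P _ (weighted_sum_tilted_eq0 s)).
by rewrite gt_eqF // mulr_gt0 // mulr_gt0 // mulrC.
Qed.

Lemma adjacent_pair_nonneg (i j : 'I_n.+2) : j = i.+1 :> nat -> 0 <= u i * u j + y ^+ 2.
Proof.
move=> ji; set s := u j; set X := _ + _.
rewrite real_leNgt ?rpredD ?rpredM ?rpredX ?u_real //; apply/negP => X_lt0.
have gap : 0 < u i - s by rewrite subr_gt0 u_decr ?ji.
have sqr_ge0 : 0 <= s ^+ 2 + y ^+ 2 := sqr_addr_ge0 (u_real j).
have s_lt0 : s < 0.
  rewrite -(pmulr_rlt0 _ gap).
  have -> : (u i - s) * s = X - (s ^+ 2 + y ^+ 2) by rewrite /X; ring.
  by rewrite subr_lt0 (lt_le_trans X_lt0).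
have term_le0 l : f l * ((u l - s) * (s * u l + y ^+ 2)) <= 0.
  rewrite pmulr_rle0 //; have [li | il] := leqP l i.
    have ul_ge : u i <= u l by exact: u_nincr.
    have ul_gap : 0 < u l - s by rewrite (lt_le_trans gap) ?lerB.
    have tilt_lt0 : s * u l + y ^+ 2 < 0.
      rewrite -(pmulr_rlt0 _ gap).
      have -> : (u i - s) * (s * u l + y ^+ 2) =
          (u l - s) * X - (u l - u i) * (s ^+ 2 + y ^+ 2) by rewrite /X; ring.
      rewrite subr_lt0 (@lt_le_trans _ _ 0) ?pmulr_rlt0 //.
      by rewrite mulr_ge0 ?subr_ge0.
    by rewrite ltW // pmulr_rlt0.
  have ul_le : u l <= s by rewrite u_nincr ?ji.
  rewrite mulr_le0_ge0 ?subr_le0 //.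
  have -> : s * u l + y ^+ 2 = s ^+ 2 + y ^+ 2 + s * (u l - s) by ring.
  by rewrite addr_ge0 // mulr_le0 ?subr_le0 ?(ltW s_lt0).
have sumN_eq0 : \sum_l - (f l * ((u l - s) * (s * u l + y ^+ 2))) = 0.
  by rewrite sumrN weighted_sum_tilted_eq0 oppr0.
have /eqP : - (f i * ((u i - s) * (s * u i + y ^+ 2))) = 0.
  by apply: (psumr_eq0P _ sumN_eq0) => // l _; rewrite oppr_ge0.
by rewrite oppr_eq0 lt_eqF // pmulr_rlt0 // pmulr_rlt0 // mulrC.
Qed.

End TiltedSums.

Section DiameterDisks.

Variable C : numClosedFieldType.

Lemma sqr_normB_real (z c : C) :
  c \is Num.real -> `|z - c| ^+ 2 = ('Re z - c) ^+ 2 + 'Im z ^+ 2.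
Proof.
by move=> c_real; rewrite {1}[z]Crect addrAC normC2_rect // rpredB // Creal_Re.
Qed.

Lemma diam_disk_sqr (a b z : C) : a \is Num.real -> b \is Num.real ->
  `|z - (a + b) / 2%:R| ^+ 2 - ((b - a) / 2%:R) ^+ 2 =
  ('Re z - a) * ('Re z - b) + 'Im z ^+ 2.
Proof.
move=> a_real b_real; rewrite sqr_normB_real; first by field.
by rewrite rpredM ?rpredD ?rpredV ?rpred_nat.
Qed.

Lemma in_closed_diam_diskE (a b z : C) : a \is Num.real -> b \is Num.real -> a <= b ->
  in_closed_diam_disk a b z <-> ('Re z - a) * ('Re z - b) + 'Im z ^+ 2 <= 0.
Proof.
move=> a_real b_real ab; rewrite /in_closed_diam_disk -diam_disk_sqr // subr_le0.
by rewrite ler_sqr ?nnegrE ?divr_ge0 ?subr_ge0.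
Qed.

Lemma in_open_diam_diskE (a b z : C) : a \is Num.real -> b \is Num.real -> a <= b ->
  in_open_diam_disk a b z <-> ('Re z - a) * ('Re z - b) + 'Im z ^+ 2 < 0.
Proof.
move=> a_real b_real ab; rewrite /in_open_diam_disk -diam_disk_sqr // subr_lt0.
by rewrite ltr_sqr ?nnegrE ?divr_ge0 ?subr_ge0.
Qed.

Lemma sum_inv_sqr_eq0_rect (m : nat) (c e : 'I_m -> C) (z : C) :
  (forall i, c i \is Num.real) -> (forall i, e i \is Num.real) ->
  \sum_i e i / (z - c i) ^+ 2 = 0 ->
  \sum_i e i / `|z - c i| ^+ 4 * (('Re z - c i) ^+ 2 - 'Im z ^+ 2) = 0 /\
  'Im z * \sum_i e i / `|z - c i| ^+ 4 * ('Re z - c i) = 0.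
Proof.
move=> c_real e_real sum_eq0; set x := 'Re z; set y := 'Im z.
have x_real : x \is Num.real := Creal_Re z.
have y_real : y \is Num.real := Creal_Im z.
set f := fun i => e i / `|z - c i| ^+ 4.
set A := \sum_i f i * ((x - c i) ^+ 2 - y ^+ 2).
set B := \sum_i - 2%:R * (y * (f i * (x - c i))).
have [A_real B_real] : A \is Num.real /\ B \is Num.real.
  by split; apply: rpred_sum => i _;
    rewrite ?(rpredM, rpredN, rpredB, rpredX, rpredV, rpred_nat, normr_real, e_real, c_real).
have sum_rect : A + 'i * B = 0.
  rewrite -sum_eq0 mulr_sumr -big_split; apply: eq_bigr => i _ /=.
  have conj_rect : (z - c i)^* = (x - c i) - 'i * y.
    by rewrite {1}[z]Crect addrAC conjC_rect ?rpredB.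
  rewrite -exprVn invC_norm exprMn conj_rect -exprVn -exprM /f.
  have -> : (x - c i - 'i * y) ^+ 2 =
      (x - c i) ^+ 2 + 'i ^+ 2 * y ^+ 2 - 'i * (2%:R * (x - c i) * y) by ring.
  by rewrite sqrCi exprVn; ring.
have A0 := congr1 (fun w => 'Re w) sum_rect; have B0 := congr1 (fun w => 'Im w) sum_rect.
rewrite /= Re_rect // (Creal_ReP _ (rpred0 _)) in A0.
rewrite /= Im_rect // (Creal_ImP _ (rpred0 _)) /B -!mulr_sumr in B0.
split=> //; apply/eqP; move/eqP: B0.
by rewrite mulf_eq0 oppr_eq0 pnatr_eq0.
Qed.

Lemma sum_inv_sqr_root_diam_disks (n : nat) (c e : 'I_n.+2 -> C) (z : C) :
  (forall i, c i \is Num.real) -> (forall i j : 'I_n.+2, (i < j)%N -> c i < c j) ->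
  (forall i, 0 < e i) -> (forall i, z != c i) ->
  \sum_i e i / (z - c i) ^+ 2 = 0 ->
  in_closed_diam_disk (c ord0) (c ord_max) z /\
  (forall i j : 'I_n.+2, j = i.+1 :> nat -> ~ in_open_diam_disk (c i) (c j) z).
Proof.
move=> c_real c_incr e_gt0 z_neq sum_eq0.
have e_real i : e i \is Num.real by rewrite gtr0_real.
have [sum_sqr_eq0 y_sum_lin_eq0] := sum_inv_sqr_eq0_rect c_real e_real sum_eq0.
have f_gt0 i : 0 < e i / `|z - c i| ^+ 4.
  by rewrite divr_gt0 // exprn_gt0 // normr_gt0 subr_eq0.
have c_le (i j : 'I_n.+2) : (i < j)%N -> c i <= c j by move/c_incr/ltW.
have u_real i : 'Re z - c i \is Num.real by rewrite rpredB ?Creal_Re.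
have u_decr (i j : 'I_n.+2) : (i < j)%N -> 'Re z - c j < 'Re z - c i.
  by move=> ij; rewrite ltrD2l ltrN2 c_incr.
have outer := outer_pair_nonpos f_gt0 u_real (Creal_Im z) u_decr sum_sqr_eq0 y_sum_lin_eq0.
split; first exact/(in_closed_diam_diskE _ (c_real _) (c_real _) (c_le ord0 ord_max isT)).
move=> i j ji; rewrite (in_open_diam_diskE _ (c_real _) (c_real _) (c_le _ _ _)) ?ji //.
apply/negP; rewrite -real_leNgt ?rpred0 ?rpredD ?rpredM ?rpredX ?u_real //.
exact: adjacent_pair_nonneg f_gt0 u_real (Creal_Im z) u_decr _ _ i j ji.
Qed.

End DiameterDisks.

Theorem theorem1 (C : numClosedFieldType) (k : nat) (p q : {poly C})
  (ps qs : seq C) :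
  (2 <= k)%N ->
  p \is a polyOver Num.real -> q \is a polyOver Num.real ->
  size p = k.+1 -> size q = k ->
  size ps = k -> size qs = k.-1 ->
  all (fun x => x \is Num.real) ps -> all (fun x => x \is Num.real) qs ->
  (forall z : C, root p z = (z \in ps)) ->
  (forall z : C, root q z = (z \in qs)) ->
  (forall i : nat, (i < k.-1)%N -> ps`_i < qs`_i /\ qs`_i < ps`_i.+1) ->
  forall z : C, root (wronskian p q) z -> Omega ps z.
Proof.
move=> + _ _ + + + + ps_real _ p_roots q_roots + z Wz.
case: k => [|[|n]] //= _ size_p size_q size_ps size_qs interlace.
pose P (i : 'I_n.+2) := ps`_i.
have P_inj : injective P := interlaced_injl size_ps interlace.
have P_incr : forall i j : 'I_n.+2, (i < j)%N -> P i < P j :=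
  interlaced_ltl size_ps interlace.
have p_eq := prod_XsubC_nth_roots size_ps size_p
  (lt_sorted_uniq (interlaced_sortedl size_ps interlace)) p_roots.
have q_eq := prod_XsubC_nth_roots size_qs size_q
  (lt_sorted_uniq (interlaced_sortedr size_qs interlace)) q_roots.
pose lam i := (\prod_(j < n.+1) ('X - (qs`_j)%:P)).[P i] / (prod_XsubC_omit P i).[P i].
have lam_gt0 i : 0 < lam i.
  exact: (interlacing_weight_gt0 P_incr (interlaced_below size_ps interlace)
    (interlaced_above size_ps interlace)).
have [z_neq sum_eq0] : (forall i, z != P i) /\ \sum_i lam i / (z - P i) ^+ 2 = 0.
  apply: sum_omit_sqr_root_inv_sqr => // [i|]; first by rewrite gt_eqF.
  move: Wz; rewrite {1}p_eq {1}q_eq wronskianZl wronskianZr scalerA.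
  rewrite wronskian_prod_XsubC_lagrange ?size_prod_XsubC_ord //.
  rewrite /root hornerZ !mulf_eq0 !lead_coef_eq0 -!size_poly_eq0 size_p size_q /=.
  by move/eqP.
have P_real i : P i \is Num.real by apply: (allP ps_real); rewrite mem_nth ?size_ps.
have [in_D0 notin_Dj] :=
  sum_inv_sqr_root_diam_disks P_real P_incr lam_gt0 z_neq sum_eq0.
split; first by rewrite -nth_last size_ps.
move=> j; rewrite size_ps => j_lt.
exact: (notin_Dj (@Ordinal n.+2 j (leqW j_lt)) (@Ordinal n.+2 j.+1 j_lt)).
Qed.
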